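(* For every $n\ge1$, every $n\times n$ Hermitian matrix $A$ and every $1\le m\le n$, $$Y_{n,m}(A)\succ X_m(A),$$ i.e. the concatenation of $\binom{n-1}{m-1}$ copies of the eigenvalue vector of $A$ majorizes the vector of all eigenvalues of all $m\times m$ principal submatrices of $A$.
   Context: $\lambda(A)$ is the eigenvalue vector of $A$ with multiplicity; $X_m(A)$ is the vector listing the eigenvalues, with multiplicity, of all $\binom nm$ principal $m\times m$ submatrices of $A$; $Y_{n,m}(A)$ is the concatenation of $\binom{n-1}{m-1}$ copies of $\lambda(A)$. For $x,y\in\mathbb R^N$, $x\succ y$ means $\sum_{i=1}^k x^{\downarrow}_i\ge\sum_{i=1}^k y^{\downarrow}_i$ for $k=1,\dots,N$ with equality at $k=N$, where $x^{\downarrow}$ is the non-increasing rearrangement. *)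

(* complex numbers are R[i] = complex R (mathcomp-real-closed)
   over R : realType, so R[i] is (a model of) the field of complex numbers. *)
From HB Require Import structures.
From mathcomp Require Import all_boot all_order all_algebra.
From mathcomp Require Import sesquilinear complex.
From mathcomp Require Import reals.
Set Implicit Arguments. Unset Strict Implicit. Unset Printing Implicit Defensive.
Import Order.TTheory GRing.Theory Num.Theory.
Local Open Scope ring_scope.

Section Defs.
Variable R : realType.
Local Notation C := R[i].

(* eigenvalues with multiplicity: the roots (with multiplicity) of the
   characteristic polynomial, which splits since C is algebraically closed *)
Definition eigvalsC n (A : 'M[C]_n) : seq C :=
  projT1 (closed_field_poly_normal (char_poly A)).

(* lambda(A): for Hermitian A the eigenvalues are real; we record their
   real parts as a vector of reals *)
Definition lambda n (A : 'M[C]_n) : seq R := map (@complex.Re R) (eigvalsC A).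

Definition psubmx n (A : 'M[C]_n) (T : {set 'I_n}) : 'M[C]_#|T| :=
  \matrix_(i < #|T|, j < #|T|) A (enum_val i) (enum_val j).

Definition Xm n (m : nat) (A : 'M[C]_n) : seq R :=
  flatten [seq lambda (psubmx A T) | T in [set T : {set 'I_n} | #|T| == m]].

Definition Ynm n (m : nat) (A : 'M[C]_n) : seq R :=
  flatten (nseq 'C(n.-1, m.-1) (lambda A)).

End Defs.

Definition majorizes (R : realDomainType) (x y : seq R) : Prop :=
  size x = size y /\
  (forall k, (1 <= k <= size x)%N ->
     \sum_(z <- take k (sort >=%R y)) z <= \sum_(z <- take k (sort >=%R x)) z) /\
  \sum_(z <- x) z = \sum_(z <- y) z.

(* Ky Fan's principle: the sum of the k largest entries of a list is the maximum
   of the weighted sums [\sum phi(z) z] over weights [0 <= phi <= 1] of total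
   mass k, and a threshold weight attains it.  Take such a weight phi for X_m(A).
   For each m-subset T, the matrix Q_T = phi(A_T) satisfies 0 <= Q_T <= I,
   tr Q_T = \sum phi(lambda(A_T)) and tr (Q_T A_T) = \sum phi(lambda) lambda.
   Lifting Q_T to C^n and expanding \sum_T tr (Q_T A_T) in an orthonormal eigenbasis
   (v_i) of A gives \sum_i u_i lambda_i(A) with u_i = \sum_T <Q_T v_i|_T, v_i|_T>,
   so 0 <= u_i <= C(n-1,m-1) (every index lies in C(n-1,m-1) subsets) and
   \sum_i u_i = k.  Such a combination is at most the sum of the k largest
   entries of Y_{n,m}(A).  The total sums agree because
   \sum_T tr A_T = C(n-1,m-1) tr A. *)

From HB Require Import structures.
From mathcomp Require Import all_boot all_order all_algebra.
From mathcomp Require Import fingroup perm.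
From mathcomp Require Import sesquilinear complex spectral.
From mathcomp Require Import reals.
From mathcomp Require Import ring zify.
Set Implicit Arguments. Unset Strict Implicit. Unset Printing Implicit Defensive.
Import Order.TTheory GRing.Theory Num.Theory Num.Def.
Local Open Scope ring_scope.

Section TopSum.
Variable R : realFieldType.

Definition topsum k (s : seq R) := \sum_(z <- take k (sort >=%R s)) z.

Lemma topsum_perm k (s1 s2 : seq R) : perm_eq s1 s2 -> topsum k s1 = topsum k s2.
Proof. by move=> /(perm_sortP ge_total ge_trans ge_anti) eq_sort; rewrite /topsum eq_sort. Qed.

Lemma sumr_indicator (P : pred R) (s : seq R) :
  \sum_(z <- s) (P z)%:R = (count P s)%:R :> R.
Proof. by rewrite -sum1_count natr_sum [RHS]big_mkcond; apply: eq_bigr => z _; case: (P z). Qed.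

Section KthLargest.
Variables (k : nat) (s : seq R).
Hypotheses (k_gt0 : (0 < k)%N) (k_le_size : (k <= size s)%N).
Let ss := sort >=%R s.
Let t := nth 0 ss k.-1.

Let perm_ss : perm_eq ss s. Proof. by rewrite perm_sort. Qed.
Let size_ss : size ss = size s. Proof. exact: size_sort. Qed.

Let nth_ss_le i j : (i <= j < size s)%N -> nth 0 ss j <= nth 0 ss i.
Proof.
move=> /andP[le_ij lt_js]; rewrite -size_ss in lt_js.
apply: (sorted_leq_nth ge_trans (@lexx _ R) 0 (sort_sorted ge_total s)) => //.
by rewrite inE (leq_ltn_trans le_ij).
Qed.

Lemma kth_le_take z : z \in take k ss -> t <= z.
Proof.
case/(nthP 0) => i; rewrite size_takel ?size_ss // => lt_ik <-.
by rewrite nth_take //; apply: nth_ss_le; apply/andP; split; lia.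
Qed.

Lemma le_kth_drop j z : (k.-1 <= j)%N -> z \in drop j ss -> z <= t.
Proof.
move=> le_kj; case/(nthP 0) => i; rewrite size_drop size_ss => lt_i <-.
by rewrite nth_drop; apply: nth_ss_le; apply/andP; split; lia.
Qed.

Lemma topsum_threshold : topsum k s = k%:R * t + \sum_(z <- s) Num.max (z - t) 0.
Proof.
rewrite /topsum -/ss -(perm_big _ perm_ss) -[in RHS](cat_take_drop k ss) big_cat /=.
rewrite [X in _ + (_ + X)]big1_seq ?addr0; last first.
  by move=> z /andP[_ /(le_kth_drop (leq_pred k)) le_zt]; apply/max_idPr; rewrite subr_le0.
rewrite [in RHS](eq_big_seq (fun z => z - t)); last first.
  by move=> z /kth_le_take le_tz; apply/max_idPl; rewrite subr_ge0.
rewrite sumrB big_const_seq count_predT iter_addr_0 size_takel ?size_ss //.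
rewrite -mulr_natl; ring.
Qed.

Lemma count_gt_kth : (count (fun z => (t < z)%R) s < k)%N.
Proof.
rewrite -(seq.permP perm_ss) -(cat_take_drop k.-1 ss) count_cat.
have -> : count (fun z => t < z) (drop k.-1 ss) = 0%N.
  apply/eqP; rewrite -leqn0 leqNgt -has_count; apply/hasPn => z.
  by move/(le_kth_drop (leqnn _)); rewrite leNgt.
by rewrite addn0 (leq_ltn_trans (count_size _ _)) // size_takel ?size_ss; lia.
Qed.

Lemma count_ge_kth :
  (k <= count (fun z => (t < z)%R) s + count (fun z => z == t) s)%N.
Proof.
rewrite -count_predUI -(seq.permP perm_ss) -(cat_take_drop k ss) count_cat -addnA.
have : all (predU (fun z => t < z) (fun z => z == t)) (take k ss).
  by apply/allP => z /kth_le_take; rewrite /= eq_sym orbC -le_eqVlt.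
by rewrite all_count => /eqP ->; rewrite size_takel ?size_ss ?leq_addr.
Qed.

Lemma topsum_weighted : exists2 phi : R -> R, (forall z, 0 <= phi z <= 1) &
  \sum_(z <- s) phi z = k%:R /\ topsum k s = \sum_(z <- s) phi z * z.
Proof.
have lt_ak := count_gt_kth; have le_kab := count_ge_kth.
set a := count _ s in lt_ak le_kab; set b := count _ s in le_kab.
pose al : R := (k - a)%:R / b%:R.
have b_gt0 : 0 < b%:R :> R by rewrite ltr0n; lia.
have al_ge0 : 0 <= al by rewrite divr_ge0 ?ler0n.
have al_le1 : al <= 1 by rewrite ler_pdivrMr // mul1r ler_nat; lia.
pose phi z := if t < z then 1 else if z == t then al else 0.
have phiE z : phi z = (t < z)%R%:R + al * (z == t)%:R.
  by rewrite /phi; case: (ltgtP t z); rewrite ?mulr0 ?addr0 ?mulr1 ?add0r.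
have sum_phi : \sum_(z <- s) phi z = k%:R.
  rewrite (eq_bigr _ (fun z _ => phiE z)) big_split /= -mulr_sumr !sumr_indicator.
  by rewrite /al mulfVK ?gt_eqF // -natrD subnKC // ltnW.
exists phi => [z|].
  by rewrite /phi; case: ifP => _; [|case: ifP => _]; rewrite ?lexx ?ler01 ?al_ge0.
split=> //; rewrite topsum_threshold.
have -> : \sum_(z <- s) phi z * z = \sum_(z <- s) phi z * (z - t) + k%:R * t.
  by rewrite -sum_phi mulr_suml -big_split; apply: eq_bigr => z _ /=; ring.
rewrite addrC; congr (_ + _); apply: eq_bigr => z _; rewrite /phi.
case: (ltgtP t z) => [lt_tz|lt_zt|<-].
- by rewrite mul1r; apply/max_idPl; rewrite subr_ge0 ltW.
- by rewrite mul0r; apply/max_idPr; rewrite subr_le0 ltW.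
- by rewrite subrr mulr0 maxxx.
Qed.

End KthLargest.

Lemma weighted_sum_le_topsum_nseq (I : finType) (x u : I -> R) (c k : nat) :
    (0 < k <= c * #|I|)%N -> (forall i, 0 <= u i <= c%:R) -> \sum_i u i = k%:R ->
  \sum_i u i * x i <= topsum k (flatten (nseq c [seq x i | i <- enum I])).
Proof.
move=> /andP[k_gt0 k_le] u_bnd sum_u.
set s := flatten _.
have size_s : size s = (c * #|I|)%N.
  by rewrite size_flatten /shape map_nseq sumn_nseq size_map -cardE mulnC.
rewrite (topsum_threshold k_gt0); last by rewrite size_s.
set t := nth _ _ _.
have -> : \sum_(z <- s) Num.max (z - t) 0 = (\sum_i Num.max (x i - t) 0) *+ c.
  by rewrite big_flatten /= big_nseq iter_addr_0 big_map big_enum.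
have -> : \sum_i u i * x i = \sum_i u i * (x i - t) + k%:R * t.
  by rewrite -sum_u mulr_suml -big_split; apply: eq_bigr => i _ /=; ring.
rewrite addrC lerD2l -mulr_natl mulr_sumr; apply: ler_sum => i _.
have /andP[u_ge0 u_le] := u_bnd i.
case: (leP (x i - t) 0) => [le_x0|lt_0x].
  by rewrite mulr0; apply: mulr_ge0_le0.
by apply: ler_wpM2r => //; apply: ltW.
Qed.

End TopSum.

Lemma sum_draws_mem n m (l : 'I_n) : (0 < m)%N ->
  (\sum_(T : {set 'I_n} | #|T| == m) (l \in T : nat))%N = 'C(n.-1, m.-1).
Proof.
move=> m_gt0.
pose g (l : 'I_n) := (\sum_(T : {set 'I_n} | #|T| == m) (l \in T : nat))%N.
have g_const l1 l2 : g l1 = g l2.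
  pose h (T : {set 'I_n}) := tperm l1 l2 @: T.
  have hK : involutive h.
    by move=> T; rewrite /h -imset_comp (eq_imset _ (tpermK l1 l2)) imset_id.
  rewrite /g (reindex_inj (inv_inj hK)); apply: eq_big => [T|T _] /=.
    by rewrite card_imset //; apply: perm_inj.
  by rewrite /h -[l1 in l1 \in _](tpermR l1 l2) mem_imset //; apply: perm_inj.
have sum_g : (\sum_l g l = m * 'C(n, m))%N.
  rewrite /g exchange_big /= (eq_bigr (fun _ => m)) => [|T /eqP <-]; last first.
    by rewrite -sum1_card [RHS]big_mkcond.
  by rewrite sum_nat_cond_const card_draws card_ord mulnC.
have : (n * g l = n * 'C(n.-1, m.-1))%N.
  rewrite mul_bin_diag prednK // -sum_g (eq_bigr (fun _ => g l)) => [|i _]; last exact: g_const.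
  by rewrite big_const_ord iter_addn_0 mulnC.
by move/eqP; rewrite eqn_pmul2l ?(leq_ltn_trans (leq0n l) (ltn_ord l)) // => /eqP.
Qed.

Lemma sum_draws_sum (V : nmodType) n m (F : 'I_n -> V) : (0 < m)%N ->
  \sum_(T : {set 'I_n} | #|T| == m) \sum_(l in T) F l = (\sum_l F l) *+ 'C(n.-1, m.-1).
Proof.
move=> m_gt0; rewrite -sumrMnl.
rewrite (eq_bigr (fun T : {set 'I_n} => \sum_l F l *+ (l \in T))) => [|T _]; last first.
  by rewrite big_mkcond; apply: eq_bigr => l _; rewrite mulrb.
by rewrite exchange_big; apply: eq_bigr => l _; rewrite sumrMnr sum_draws_mem.
Qed.

Lemma char_poly_similar (F : comNzRingType) p (Q P D : 'M[F]_p) :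
  Q *m P = 1%:M -> char_poly (Q *m D *m P) = char_poly D.
Proof.
move=> QP; rewrite /char_poly /char_poly_mx.
set f := map_mx (@polyC F).
have fQP : f Q *m f P = 1%:M by rewrite -map_mxM QP map_mx1.
have -> : 'X%:M - f (Q *m D *m P) = f Q *m ('X%:M - f D) *m f P.
  rewrite /f !map_mxM -/f mulmxBr mulmxBl; congr (_ - _).
  by rewrite scalar_mxC -mulmxA fQP mulmx1.
by rewrite !det_mulmx mulrAC -det_mulmx fQP det1 mul1r.
Qed.

Section Spectral.
Variable R : realType.
Local Notation C := (complex R).
Local Open Scope sesquilinear_scope.
Local Open Scope complex_scope.

Lemma trmxC_mul m n p (X : 'M[C]_(m, n)) (Y : 'M[C]_(n, p)) :
  (X *m Y)^t* = Y^t* *m X^t*.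
Proof. by rewrite trmx_mul map_mxM. Qed.

Lemma mxE_conj_form n p (M : 'M[C]_(n, p)) (X : 'M[C]_p) i :
  (M *m X *m M^t*) i i = (row i M *m X *m (row i M)^t*) 0 0.
Proof.
rewrite !mxE; apply: eq_bigr => k _; rewrite !mxE; congr (_ * _).
by apply: eq_bigr => l _; rewrite !mxE.
Qed.

Lemma mulmx_trC_self p (x : 'rV[C]_p) : (x *m x^t*) 0 0 = \sum_j x 0 j * conjC (x 0 j).
Proof. by rewrite mxE; apply: eq_bigr => j _; rewrite !mxE. Qed.

Lemma mxE_diag_form p (w z : 'rV[C]_p) :
  (z *m diag_mx w *m z^t*) 0 0 = \sum_j w 0 j * (z 0 j * conjC (z 0 j)).
Proof.
by rewrite mul_mx_diag !mxE; apply: eq_bigr => j _; rewrite !mxE mulrAC mulrC.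
Qed.

Section SpectralDecomposition.
Variables (p : nat) (B : 'M[C]_p).
Local Notation U := (spectralmx B).
Local Notation d := (spectral_diag B).

Lemma spectralmx_mul_trC : U *m U^t* = 1%:M.
Proof. exact/unitarymxP/spectral_unitarymx. Qed.

Lemma trC_mul_spectralmx : U^t* *m U = 1%:M.
Proof. by rewrite -invmx_unitary ?spectral_unitarymx // mulVmx // spectral_unit. Qed.

Lemma mxtrace_spectral_conj (M : 'M[C]_p) : \tr (U^t* *m M *m U) = \tr M.
Proof. by rewrite mxtrace_mulC mulmxA spectralmx_mul_trC mul1mx. Qed.

Lemma spectral_decomposition : B \is normalmx -> B = U^t* *m diag_mx d *m U.
Proof.
by move/orthomx_spectralP => {1}->; rewrite invmx_unitary // spectral_unitarymx.
Qed.

Lemma perm_eigvalsC : B \is normalmx -> perm_eq (eigvalsC B) [seq d 0 j | j <- enum 'I_p].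
Proof.
move=> nB; apply: prod_XsubC_eq; rewrite big_map big_enum /= /eigvalsC.
case: closed_field_poly_normal => r /=.
rewrite (monicP (char_poly_monic B)) scale1r => <-.
rewrite {1}(spectral_decomposition nB) char_poly_similar ?trC_mul_spectralmx //.
by rewrite char_poly_trig ?diag_mx_is_trig //; apply: eq_bigr => j _; rewrite mxE eqxx.
Qed.

Lemma perm_lambda : B \is normalmx ->
  perm_eq (lambda B) [seq complex.Re (d 0 j) | j <- enum 'I_p].
Proof.
by move=> nB; have := perm_map (@complex.Re R) (perm_eigvalsC nB); rewrite -map_comp.
Qed.

Lemma big_lambda (F : R -> R) : B \is normalmx ->
  \sum_(z <- lambda B) F z = \sum_j F (complex.Re (d 0 j)).
Proof. by move=> nB; rewrite (perm_big _ (perm_lambda nB)) big_map big_enum. Qed.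

Lemma size_lambda : B \is normalmx -> size (lambda B) = p.
Proof. by move=> nB; rewrite (perm_size (perm_lambda nB)) size_map size_enum_ord. Qed.

Lemma mxtrace_spectral_rows (X : 'M[C]_p) :
  \tr X = \sum_i (row i U *m X *m (row i U)^t*) 0 0.
Proof.
rewrite -[X in \tr X]mul1mx -trC_mul_spectralmx -mulmxA mxtrace_mulC /mxtrace.
by apply: eq_bigr => i _; rewrite mxE_conj_form.
Qed.

Let w (phi : R -> R) : 'rV[C]_p := \row_j (phi (complex.Re (d 0 j)))%:C.

(* For Hermitian B, [spectral_fun phi] is phi(B), phi acting on the eigenvalues. *)
Definition spectral_fun phi := U^t* *m diag_mx (w phi) *m U.

Lemma mxtrace_spectral_fun phi :
  \tr (spectral_fun phi) = (\sum_j phi (complex.Re (d 0 j)))%:C.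
Proof.
rewrite mxtrace_spectral_conj mxtrace_diag rmorph_sum.
by apply: eq_bigr => j _; rewrite !mxE.
Qed.

Lemma spectral_fun_form_bounds phi : (forall z, 0 <= phi z <= 1) ->
  forall y : 'rV[C]_p, 0 <= (y *m spectral_fun phi *m y^t*) 0 0 <= (y *m y^t*) 0 0.
Proof.
move=> phi_bnd y; pose z := y *m U^t*.
have zC : z^t* = U *m y^t* by rewrite /z trmxC_mul trmxCK.
have -> : y *m spectral_fun phi *m y^t* = z *m diag_mx (w phi) *m z^t*.
  by rewrite zC /spectral_fun /z !mulmxA.
have -> : y *m y^t* = z *m diag_mx (const_mx 1) *m z^t*.
  by rewrite zC /z diag_const_mx mulmx1 -mulmxA (mulmxA (U^t*)) trC_mul_spectralmx mul1mx.
have normC_ge0 (c : C) : 0 <= c * conjC c by rewrite -normCK exprn_ge0.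
rewrite !mxE_diag_form; apply/andP; split.
  apply: sumr_ge0 => j _; rewrite !mxE mulr_ge0 // ler0c.
  by case/andP: (phi_bnd (complex.Re (d 0 j))).
apply: ler_sum => j _; rewrite !mxE mul1r ler_piMl // -(rmorph1 (real_complex R)) lecR.
by case/andP: (phi_bnd (complex.Re (d 0 j))).
Qed.

Hypothesis B_herm : B \is hermsymmx.

Lemma spectral_diag_ReK j : (complex.Re (d 0 j))%:C = d 0 j.
Proof.
by apply: RRe_real; move/mxOverP: (hermitian_spectral_diag_real B_herm); apply.
Qed.

Lemma mxtrace_hermitian : \tr B = (\sum_j complex.Re (d 0 j))%:C.
Proof.
rewrite {1}(spectral_decomposition (hermitian_normalmx B_herm)).
rewrite mxtrace_spectral_conj mxtrace_diag rmorph_sum.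
by apply: eq_bigr => j _; apply/esym/spectral_diag_ReK.
Qed.

Lemma mxtrace_mul_spectral_rows (X : 'M[C]_p) :
  \tr (X *m B) = \sum_i (row i U *m X *m (row i U)^t*) 0 0 * d 0 i.
Proof.
rewrite {1}(spectral_decomposition (hermitian_normalmx B_herm)) !mulmxA.
rewrite mxtrace_mulC !mulmxA mul_mx_diag.
by apply: eq_bigr => i _; rewrite mxE mxE_conj_form.
Qed.

Lemma mxtrace_spectral_fun_mul phi : \tr (spectral_fun phi *m B) =
  (\sum_j phi (complex.Re (d 0 j)) * complex.Re (d 0 j))%:C.
Proof.
have -> : spectral_fun phi *m B = U^t* *m (diag_mx (w phi) *m diag_mx d) *m U.
  rewrite /spectral_fun {3}(spectral_decomposition (hermitian_normalmx B_herm)).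
  by rewrite !mulmxA -(mulmxA (U^t* *m diag_mx (w phi)) U) spectralmx_mul_trC mulmx1.
rewrite mxtrace_spectral_conj mulmx_diag mxtrace_diag rmorph_sum.
by apply: eq_bigr => j _; rewrite !mxE rmorphM /= spectral_diag_ReK.
Qed.

End SpectralDecomposition.

Section Selection.
Variables (n : nat) (T : {set 'I_n}).

Definition selmx : 'M[C]_(n, #|T|) := \matrix_(i, j) (i == enum_val j)%:R.

Lemma mul_selmxE p (M : 'M[C]_(p, n)) i j : (M *m selmx) i j = M i (enum_val j).
Proof.
rewrite mxE (bigD1 (enum_val j)) //= mxE eqxx mulr1 big1 ?addr0 // => l lj.
by rewrite mxE (negbTE lj) mulr0.
Qed.

Lemma trC_selmx_mulE p (M : 'M[C]_(n, p)) i j : (selmx^t* *m M) i j = M (enum_val i) j.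
Proof.
have -> : selmx^t* *m M = (M^t* *m selmx)^t* by rewrite trmxC_mul trmxCK.
by rewrite mxE [X in conjC X]mxE mul_selmxE !mxE conjCK.
Qed.

Lemma trC_selmx_mul_selmx : selmx^t* *m selmx = 1%:M.
Proof. by apply/matrixP => i j; rewrite trC_selmx_mulE !mxE (inj_eq enum_val_inj). Qed.

Lemma mul_selmx_form (v : 'rV[C]_n) :
  (v *m selmx *m (v *m selmx)^t*) 0 0 = \sum_(l in T) v 0 l * conjC (v 0 l).
Proof.
rewrite mulmx_trC_self [RHS]big_enum_val.
by apply: eq_bigr => j _; rewrite mul_selmxE.
Qed.

Variable A : 'M[C]_n.

Lemma psubmxE : psubmx A T = selmx^t* *m A *m selmx.
Proof. by apply/matrixP => i j; rewrite mul_selmxE trC_selmx_mulE !mxE. Qed.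

Lemma psubmx_herm : A \is hermsymmx -> psubmx A T \is hermsymmx.
Proof.
move/is_hermitianmxP; rewrite expr0 scale1r => A_trC.
apply/is_hermitianmxP; rewrite expr0 scale1r psubmxE.
by rewrite !trmxC_mul trmxCK -A_trC !mulmxA.
Qed.

Lemma mxtrace_psubmx : \tr (psubmx A T) = \sum_(l in T) A l l.
Proof. by rewrite [RHS]big_enum_val; apply: eq_bigr => j _; rewrite mxE. Qed.

End Selection.

Section Draws.
Variables (n m : nat) (A : 'M[C]_n).
Hypotheses (A_herm : A \is hermsymmx) (m_gt0 : (0 < m)%N).
Local Notation U := (spectralmx A).
Local Notation d := (spectral_diag A).
Local Notation c := 'C(n.-1, m.-1).

(* The weight u_i that the i-th eigenvector of A receives from the phi(A_T). *)
Definition draws_weight phi i : C := \sum_(T : {set 'I_n} | #|T| == m)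
  (row i U *m selmx T *m spectral_fun (psubmx A T) phi *m (row i U *m selmx T)^t*) 0 0.

Lemma sum_mxtrace_spectral_fun phi :
  \sum_(T : {set 'I_n} | #|T| == m) \tr (spectral_fun (psubmx A T) phi) =
  \sum_i draws_weight phi i.
Proof.
have lift T : \tr (spectral_fun (psubmx A T) phi) =
    \tr (selmx T *m spectral_fun (psubmx A T) phi *m (selmx T)^t*).
  by rewrite [RHS]mxtrace_mulC mulmxA trC_selmx_mul_selmx mul1mx.
under eq_bigr do rewrite lift (mxtrace_spectral_rows A).
rewrite exchange_big; apply: eq_bigr => i _; apply: eq_bigr => T _.
by rewrite trmxC_mul !mulmxA.
Qed.

Lemma sum_mxtrace_spectral_fun_mul phi :
  \sum_(T : {set 'I_n} | #|T| == m) \tr (spectral_fun (psubmx A T) phi *m psubmx A T)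
  = \sum_i draws_weight phi i * d 0 i.
Proof.
have lift T : \tr (spectral_fun (psubmx A T) phi *m psubmx A T) =
    \tr ((selmx T *m spectral_fun (psubmx A T) phi *m (selmx T)^t*) *m A).
  by rewrite {2}psubmxE !mulmxA mxtrace_mulC !mulmxA.
under eq_bigr do rewrite lift (mxtrace_mul_spectral_rows A_herm).
rewrite exchange_big; apply: eq_bigr => i _; rewrite mulr_suml.
by apply: eq_bigr => T _; rewrite trmxC_mul !mulmxA.
Qed.

Lemma draws_weight_bounds phi : (forall z, 0 <= phi z <= 1) ->
  forall i, 0 <= draws_weight phi i <= c%:R.
Proof.
move=> phi_bnd i; pose y T := row i U *m selmx T.
have form_bnd T := spectral_fun_form_bounds (psubmx A T) phi_bnd (y T).
apply/andP; split; first by apply: sumr_ge0 => T _; case/andP: (form_bnd T).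
apply: le_trans (_ : \sum_(T : {set 'I_n} | #|T| == m) (y T *m (y T)^t*) 0 0 <= _).
  by apply: ler_sum => T _; case/andP: (form_bnd T).
under eq_bigr do rewrite mul_selmx_form.
rewrite sum_draws_sum // -mulr_natl.
have -> : \sum_l row i U 0 l * conjC (row i U 0 l) = (U *m U^t*) i i.
  by rewrite mxE; apply: eq_bigr => l _; rewrite !mxE.
by rewrite spectralmx_mul_trC mxE eqxx mulr1.
Qed.

Lemma big_Xm (F : R -> R) : \sum_(z <- Xm m A) F z =
  \sum_(T : {set 'I_n} | #|T| == m) \sum_j F (complex.Re (spectral_diag (psubmx A T) 0 j)).
Proof.
rewrite /Xm big_flatten /= big_map big_enum /=.
rewrite (eq_bigl (fun T : {set 'I_n} => #|T| == m)) => [|T]; last by rewrite inE.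
by apply: eq_bigr => T _; rewrite big_lambda // hermitian_normalmx // psubmx_herm.
Qed.

Lemma big_Ynm (F : R -> R) :
  \sum_(z <- Ynm m A) F z = (\sum_i F (complex.Re (d 0 i))) *+ c.
Proof. by rewrite /Ynm big_flatten big_nseq iter_addr_0 big_lambda // hermitian_normalmx. Qed.

Lemma size_Xm : size (Xm m A) = (c * n)%N.
Proof.
rewrite /Xm size_flatten /shape -map_comp sumnE big_map big_enum /=.
rewrite (eq_bigr (fun _ => m)) => [|T]; last first.
  by rewrite inE => /eqP <-; rewrite size_lambda // hermitian_normalmx // psubmx_herm.
by rewrite sum_nat_const card_draws card_ord [RHS]mulnC mul_bin_diag prednK // mulnC.
Qed.

Lemma size_Ynm : size (Ynm m A) = (c * n)%N.
Proof.
rewrite /Ynm size_flatten /shape map_nseq sumn_nseq mulnC.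
by rewrite size_lambda // hermitian_normalmx.
Qed.

Lemma sum_Xm_Ynm : \sum_(z <- Xm m A) z = \sum_(z <- Ynm m A) z.
Proof.
rewrite big_Xm big_Ynm; apply: (@complexI R); rewrite rmorphMn rmorph_sum.
transitivity (\sum_(T : {set 'I_n} | #|T| == m) \tr (psubmx A T)).
  by apply: eq_bigr => T _; rewrite (mxtrace_hermitian (psubmx_herm _ A_herm)).
under eq_bigr do rewrite mxtrace_psubmx.
by rewrite sum_draws_sum // -/(\tr A) mxtrace_hermitian.
Qed.

Lemma topsum_Xm_le_Ynm k : (0 < k <= size (Xm m A))%N ->
  topsum k (Xm m A) <= topsum k (Ynm m A).
Proof.
move=> /andP[k_gt0 k_le]; have [phi phi_bnd [sum_phi ->]] := topsum_weighted k_gt0 k_le.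
pose u i := complex.Re (draws_weight phi i).
have uE i : (u i)%:C = draws_weight phi i.
  by apply: RRe_real; apply: ger0_real; case/andP: (draws_weight_bounds phi_bnd i).
have u_bnd i : 0 <= u i <= c%:R.
  have := draws_weight_bounds phi_bnd i.
  have -> : c%:R = (c%:R : R)%:C :> C by rewrite rmorph_nat.
  by rewrite -uE ler0c lecR.
have sum_u : \sum_i u i = k%:R.
  apply: (@complexI R); rewrite -sum_phi big_Xm !rmorph_sum /=.
  under [RHS]eq_bigr do rewrite -mxtrace_spectral_fun.
  by rewrite sum_mxtrace_spectral_fun; apply: eq_bigr => i _; rewrite uE.
have -> : \sum_(z <- Xm m A) phi z * z = \sum_i u i * complex.Re (d 0 i).
  apply: (@complexI R); rewrite big_Xm !rmorph_sum /=.
  under [LHS]eq_bigr do rewrite -(mxtrace_spectral_fun_mul (psubmx_herm _ A_herm)).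
  rewrite sum_mxtrace_spectral_fun_mul; apply: eq_bigr => i _.
  by rewrite rmorphM /= uE spectral_diag_ReK.
have perm_Y : perm_eq (Ynm m A) (flatten (nseq c [seq complex.Re (d 0 i) | i <- enum 'I_n])).
  rewrite /Ynm; elim: c => //= c' IH.
  by apply: perm_cat => //; apply/perm_lambda/hermitian_normalmx.
rewrite (topsum_perm _ perm_Y) weighted_sum_le_topsum_nseq // card_ord k_gt0.
by rewrite -size_Xm.
Qed.

End Draws.
End Spectral.

Theorem theorem4p5 (R : realType) (n : nat) (A : 'M[complex R]_n) (m : nat) :
  (1 <= n)%N -> A \is hermsymmx -> (1 <= m <= n)%N ->
  majorizes (Ynm m A) (Xm m A).
Proof.
move=> _ A_herm /andP[m_gt0 _].
have size_YX : size (Ynm m A) = size (Xm m A) by rewrite size_Xm ?size_Ynm.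
split=> //; split; last exact/esym/sum_Xm_Ynm.
by move=> k; rewrite size_YX; apply: topsum_Xm_le_Ynm.
Qed.
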